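(* For every $n\in\mathbb N$, $C_{L_n}\le C_{L_{n+1}}$.
   Context: $L_n$ is the path graph with vertices $\{1,\dots,n\}$ and edges $\{j,j+1\}$, with distance $|i-j|$. A measure on $L_n$ is a weight function $\mu:\{1,\dots,n\}\to(0,\infty)$, $\mu(A)=\sum_{v\in A}\mu(v)$. Closed balls: $B(x,r)=\{y:|x-y|\le r\}$. $C_\mu=\sup\{\mu(B(x,2k+1))/\mu(B(x,k)):1\le x\le n,\ k\ge0\}$ and $C_{L_n}=\inf_\mu C_\mu$. *)

From HB Require Import structures.
From mathcomp Require Import all_boot all_order all_algebra.
From mathcomp Require Import classical_sets reals.
Set Implicit Arguments. Unset Strict Implicit. Unset Printing Implicit Defensive.
Import Order.TTheory GRing.Theory Num.Theory.
Local Open Scope ring_scope.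
Local Open Scope classical_set_scope.

(* distance |i - j| on the path graph L_n (vertices 1..n) *)
Definition pdist (i j : nat) : nat := ((i - j) + (j - i))%N.

Definition ball_mass {R : realType} (n : nat) (mu : nat -> R) (x r : nat) : R :=
  \sum_(1 <= y < n.+1 | (pdist x y <= r)%N) mu y.

(* a measure on L_n: positive weights on the vertices 1..n
   (values outside 1..n are irrelevant) *)
Definition is_measure_on {R : realType} (n : nat) (mu : nat -> R) : Prop :=
  forall v : nat, (1 <= v <= n)%N -> 0 < mu v.

Definition C_mu {R : realType} (n : nat) (mu : nat -> R) : R :=
  sup [set t | exists x k : nat, (1 <= x <= n)%N /\
       t = ball_mass n mu x (2 * k + 1) / ball_mass n mu x k].

Definition C_L {R : realType} (n : nat) : R :=
  inf [set t | exists mu : nat -> R, is_measure_on n mu /\ t = C_mu n mu].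

(* Let nu be a measure on L_(n+1).  If C_nu > 3 there is nothing to prove, since
   the counting measure already gives C_(L_n) <= 3.  Otherwise the inequalities
   nu(y-1) + nu(y) + nu(y+1) <= C_nu nu(y) <= 3 nu(y) for k = 0 make nu concave
   on {1, ..., n+1}, and they also force C_nu >= 2.  The restriction of nu to L_n
   then still satisfies every doubling inequality with constant C_nu.  If the
   ball B(x, k) of L_(n+1) misses the vertex n + 1, restricting only shrinks the
   numerator.  If it contains n + 1, either nu increases towards n + 1 and
   concavity alone bounds the mass of B(x, 2k+1) \ B(x, k) by that of B(x, k),
   or it does not and the doubling inequality at the centre x + 1 of L_(n+1),
   corrected by concavity, takes over. *)

From mathcomp Require Import all_boot all_order all_algebra.
From mathcomp Require Import classical_sets reals.
From mathcomp Require Import boolp zify lra.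
Import Order.TTheory GRing.Theory Num.Theory.
Local Open Scope ring_scope.

Lemma is_measure_on_le {R : realType} {N M : nat} {mu : nat -> R} :
  (N <= M)%N -> is_measure_on M mu -> is_measure_on N mu.
Proof. by move=> NM mu_pos v vN; apply: mu_pos; lia. Qed.

Section ConcaveSequences.
Context {R : realDomainType}.

Definition concave_on (f : nat -> R) (a b : nat) :=
  forall j, (a <= j)%N -> (j.+2 <= b)%N -> f j.+2 - f j.+1 <= f j.+1 - f j.

Context {f : nat -> R} {a b : nat}.
Hypothesis f_concave : concave_on f a b.

Lemma concave_incr_le i j : (a <= i <= j)%N -> (j < b)%N ->
  f j.+1 - f j <= f i.+1 - f i.
Proof.
case/andP=> ai ij; rewrite -(subnKC ij).
elim: (j - i)%N => [|d IHd] jb; first by rewrite addn0.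
apply: le_trans (IHd _); last by lia.
by rewrite addnS; apply: f_concave; lia.
Qed.

Lemma concave_le_tangent p z : (a <= p < b)%N -> (a <= z <= b)%N ->
  f z <= f p + (f p.+1 - f p) * (z%:R - p%:R).
Proof.
move=> /andP[ap pb] /andP[az zb].
have [pz|zp] := leqP p z.
  have : f z - f p <= (f p.+1 - f p) *+ (z - p).
    rewrite -(telescope_sumr _ pz) -sumr_const_nat.
    by apply: ler_sum_nat => j /andP[pj jz]; apply: concave_incr_le; lia.
  by rewrite -natrB // mulr_natr; lra.
have : (f p.+1 - f p) *+ (p - z) <= f p - f z.
  rewrite -(telescope_sumr _ (ltnW zp)) -sumr_const_nat.
  by apply: ler_sum_nat => j /andP[zj jp]; apply: concave_incr_le; lia.
rewrite -[z%:R - p%:R]opprB -natrB ?(ltnW zp) // mulrN mulr_natr; lra.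
Qed.

Lemma concave_ge_min i z j : (a <= i)%N -> (i <= z <= j)%N -> (j <= b)%N ->
  Num.min (f i) (f j) <= f z.
Proof.
move=> ai /andP[iz zj] jb; rewrite ge_min.
have [->|ltzj] := eqVneq z j; first by rewrite lexx orbT.
have {zj}ltzj : (z < j)%N by lia.
have [incr_ge0|incr_lt0] := leP 0 (f z.+1 - f z).
  apply/orP; left; rewrite -subr_ge0 -(telescope_sumr _ iz).
  rewrite big_nat; apply: sumr_ge0 => l /andP[il lz].
  by apply: le_trans incr_ge0 _; apply: concave_incr_le; lia.
apply/orP; right.
rewrite -subr_ge0 -opprB oppr_ge0 -(telescope_sumr _ (ltnW ltzj)).
rewrite big_nat; apply: sumr_le0 => l /andP[zl lj].
by apply/ltW/le_lt_trans/incr_lt0; apply: concave_incr_le; lia.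
Qed.

Lemma concave_sum_left_le_right q p : (a <= q <= p)%N -> (p < b)%N ->
  (p - q <= b - p)%N -> 0 <= f p -> f p <= f b ->
  \sum_(q <= i < p) f i <= \sum_(p <= i < b) f i.
Proof.
move=> /andP[aq qp] pb shift fp_ge0 fp_le_fb.
have min_fp : Num.min (f p) (f b) = f p by exact: min_l.
have incr_ge0 : 0 <= f p.+1 - f p.
  by rewrite subr_ge0 -{1}min_fp; apply: concave_ge_min; lia.
apply: (@le_trans _ _ (f p *+ (b - p))).
  apply: (@le_trans _ _ (f p *+ (p - q))); last exact: ler_wpMn2l.
  rewrite -sumr_const_nat; apply: ler_sum_nat => i /andP[qi ip].
  have := @concave_le_tangent p i ltac:(lia) ltac:(lia).
  have : (f p.+1 - f p) * (i%:R - p%:R) <= 0.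
    by apply: mulr_ge0_le0; rewrite // subr_le0 ler_nat; lia.
  lra.
rewrite -sumr_const_nat; apply: ler_sum_nat => i /andP[pi ib].
by rewrite -{1}min_fp; apply: concave_ge_min; lia.
Qed.

Lemma concave_add_le_twice i p j : (a <= i <= p)%N -> (p <= j <= b)%N ->
  (p - i <= j - p)%N -> f j <= f p -> f i + f j <= 2 * f p.
Proof.
move=> /andP[ai ip] /andP[pj jb] shift fj_le_fp.
have [lt_pj|le_jp] := ltnP p j; last first.
  have [-> ->] : i = p /\ j = p by lia.
  lra.
have tan_i := @concave_le_tangent p i ltac:(lia) ltac:(lia).
have [incr_ge0|incr_lt0] := leP 0 (f p.+1 - f p).
  have : (f p.+1 - f p) * (i%:R - p%:R) <= 0.
    by apply: mulr_ge0_le0; rewrite // subr_le0 ler_nat.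
  lra.
have tan_j := @concave_le_tangent p j ltac:(lia) ltac:(lia).
have : (f p.+1 - f p) * ((i%:R - p%:R) + (j%:R - p%:R)) <= 0.
  apply: mulr_le0_ge0; first exact: ltW.
  have : (p - i)%:R <= (j - p)%:R :> R by rewrite ler_nat.
  by rewrite !natrB // ?(ltnW lt_pj); lra.
lra.
Qed.

End ConcaveSequences.

Lemma ler_term_sum_nat {R : numDomainType} (F : nat -> R) a b y :
  (forall i, (a <= i < b)%N -> 0 <= F i) -> (a <= y < b)%N ->
  F y <= \sum_(a <= i < b) F i.
Proof.
move=> F_ge0 yab; rewrite (bigD1_seq y) ?mem_index_iota ?iota_uniq //= lerDl.
rewrite big_seq_cond; apply: sumr_ge0 => i /andP[+ _].
by rewrite mem_index_iota; exact: F_ge0.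
Qed.

Section Balls.
Context {R : realType} {N : nat} {mu : nat -> R}.

Lemma ball_massE x r : (1 <= x <= N)%N ->
  ball_mass N mu x r = \sum_(maxn 1 (x - r) <= y < (minn N (x + r)).+1) mu y.
Proof.
move=> xN; rewrite /ball_mass big_mkcond /=.
have lo_ge1 : (1 <= maxn 1 (x - r))%N by lia.
have lo_le_hi : (maxn 1 (x - r) <= (minn N (x + r)).+1)%N by lia.
have hi_leN : ((minn N (x + r)).+1 <= N.+1)%N by lia.
rewrite (big_cat_nat lo_ge1 (leq_trans lo_le_hi hi_leN)).
rewrite (big_cat_nat lo_le_hi hi_leN) /=.
rewrite [X in X + _]big1_seq ?add0r; last first.
  move=> y; rewrite mem_index_iota => y_lo.
  by rewrite ifF //; apply/negbTE; rewrite /pdist; lia.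
rewrite [X in _ + X]big1_seq ?addr0; last first.
  move=> y; rewrite mem_index_iota => y_hi.
  by rewrite ifF //; apply/negbTE; rewrite /pdist; lia.
by apply: eq_big_nat => y y_in; rewrite ifT // /pdist; lia.
Qed.

Lemma ball_mass_interval x r {lo hi : nat} :
  (1 <= x <= N)%N -> lo = maxn 1 (x - r) -> hi = (minn N (x + r)).+1 ->
  ball_mass N mu x r = \sum_(lo <= y < hi) mu y.
Proof. by move=> xN -> ->; exact: ball_massE. Qed.

Lemma ball_mass_recr x r : ball_mass N.+1 mu x r =
  ball_mass N mu x r + (if (pdist x N.+1 <= r)%N then mu N.+1 else 0).
Proof.
by rewrite /ball_mass !(big_mkcond (fun y => pdist x y <= r)%N) big_nat_recr.
Qed.

Hypothesis mu_pos : is_measure_on N mu.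

Lemma interval_mass_ge0 a b : (1 <= a)%N -> (b <= N.+1)%N ->
  0 <= \sum_(a <= y < b) mu y.
Proof.
move=> a_ge1 b_le; rewrite big_nat; apply: sumr_ge0 => y ?.
by apply/ltW/mu_pos; lia.
Qed.

Lemma ball_mass_ge_center x r : (1 <= x <= N)%N -> mu x <= ball_mass N mu x r.
Proof.
move=> xN; rewrite ball_massE //; apply: ler_term_sum_nat; last by lia.
by move=> y ?; apply/ltW/mu_pos; lia.
Qed.

Lemma ball_mass_gt0 x r : (1 <= x <= N)%N -> 0 < ball_mass N mu x r.
Proof.
by move=> xN; apply: lt_le_trans (mu_pos x xN) (ball_mass_ge_center x r xN).
Qed.

Lemma ball_mass_le_total x r : ball_mass N mu x r <= \sum_(1 <= y < N.+1) mu y.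
Proof.
rewrite /ball_mass big_mkcond /=; apply: ler_sum_nat => y yN.
by case: ifP => _; [exact: lexx | exact/ltW/mu_pos].
Qed.

End Balls.

Definition doubling_on {R : realType} (N : nat) (mu : nat -> R) (C : R) :=
  forall x k, (1 <= x <= N)%N ->
    ball_mass N mu x (2 * k + 1) <= C * ball_mass N mu x k.

Local Open Scope classical_set_scope.

Lemma sup_ge0 {R : realType} (E : set R) :
  (forall t, E t -> 0 <= t) -> 0 <= sup E.
Proof.
move=> E_ge0; have [[[t Et] E_ub]|?] := pselect (has_sup E).
  exact: le_trans (E_ge0 t Et) (ub_le_sup E_ub Et).
by rewrite sup_out.
Qed.

Lemma sup_le_ge0 {R : realType} (E : set R) b :
  0 <= b -> ubound E b -> sup E <= b.
Proof.
move=> b_ge0 E_le_b; have [E_ne0|E0] := pselect (E !=set0); first exact: ge_sup.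
suff -> : E = set0 by rewrite sup0.
by apply/seteqP; split => // t Et; apply: E0; exists t.
Qed.

Local Close Scope classical_set_scope.

Section DoublingConstant.
Context {R : realType} {N : nat} {mu : nat -> R}.
Hypothesis mu_pos : is_measure_on N mu.

Lemma ratio_le_C_mu x k : (1 <= x <= N)%N ->
  ball_mass N mu x (2 * k + 1) / ball_mass N mu x k <= C_mu N mu.
Proof.
move=> xN; apply: ub_le_sup; last by exists x, k.
(* Each ratio is at most total / mu y, as the centre lies in the smaller ball. *)
pose total := \sum_(1 <= y < N.+1) mu y.
exists (total * \sum_(1 <= y < N.+1) (mu y)^-1) => _ [y [j [yN ->]]].
have mu_y := mu_pos _ yN.
have center := ball_mass_ge_center mu_pos y j yN.
have inv_le : (mu y)^-1 <= \sum_(1 <= z < N.+1) (mu z)^-1.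
  apply: ler_term_sum_nat; last by lia.
  by move=> z ?; rewrite invr_ge0; apply/ltW/mu_pos.
have one_le : 1 <= (\sum_(1 <= z < N.+1) (mu z)^-1) * ball_mass N mu y j.
  rewrite -(mulVf (lt0r_neq0 mu_y)); apply: ler_pM => //; last exact: ltW.
  by rewrite invr_ge0 ltW.
rewrite ler_pdivrMr ?(ball_mass_gt0 mu_pos y j yN) // -mulrA.
apply: le_trans (ball_mass_le_total mu_pos y (2 * j + 1)) _.
rewrite -[leLHS]mulr1; apply: ler_wpM2l => //.
exact: interval_mass_ge0 mu_pos 1 N.+1 isT (leqnn _).
Qed.

Lemma doubling_C_mu : doubling_on N mu (C_mu N mu).
Proof.
move=> x k xN; rewrite -ler_pdivrMr ?(ball_mass_gt0 mu_pos x k xN) //.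
exact: ratio_le_C_mu.
Qed.

Lemma C_mu_ge0 : 0 <= C_mu N mu.
Proof.
apply: sup_ge0 => _ [x [k [xN ->]]].
by apply: divr_ge0; apply/ltW/(ball_mass_gt0 mu_pos).
Qed.

Lemma C_mu_le C : 0 <= C -> doubling_on N mu C -> C_mu N mu <= C.
Proof.
move=> C_ge0 mu_doubling; apply: sup_le_ge0 => // _ [x [k [xN ->]]].
by rewrite ler_pdivrMr ?(ball_mass_gt0 mu_pos x k xN) //; apply: mu_doubling.
Qed.

End DoublingConstant.

Lemma C_L_le_C_mu {R : realType} {N : nat} {mu : nat -> R} :
  is_measure_on N mu -> C_L N <= C_mu N mu.
Proof.
move=> mu_pos; apply: ge_inf; last by exists mu.
by exists 0 => _ [nu [nu_pos ->]]; apply: C_mu_ge0.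
Qed.

Lemma counting_measure_doubling {R : realType} (N : nat) :
  doubling_on N (fun=> 1 : R) 3.
Proof.
by move=> x k xN; rewrite !ball_massE // !sumr_const_nat -natrM ler_nat; lia.
Qed.

Lemma C_L_le3 {R : realType} (N : nat) : C_L N <= 3 :> R.
Proof.
have one_pos : is_measure_on N (fun=> 1 : R) by move=> v _; exact: ltr01.
apply: le_trans (C_L_le_C_mu one_pos) _.
by apply: (C_mu_le one_pos) (counting_measure_doubling N).
Qed.

Section Restriction.
Context {R : realType} {n : nat} {f : nat -> R} {C : R}.
Hypotheses (f_pos : is_measure_on n.+1 f) (f_doubling : doubling_on n.+1 f C).
Hypothesis C_le3 : C <= 3.

Lemma doubling_ge2 : (0 < n)%N -> 2 <= C.
Proof.
move=> n_gt0.
have at_end := f_doubling n.+1 0 ltac:(lia).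
rewrite (ball_mass_interval _ _ (lo := n) (hi := n.+2)) in at_end; try lia.
rewrite (ball_mass_interval _ _ (lo := n.+1) (hi := n.+2)) in at_end; try lia.
rewrite big_nat_recr //= !big_nat1 in at_end.
have at_prev : f n + f n.+1 <= C * f n.
  have := f_doubling n 0 ltac:(lia).
  rewrite (ball_mass_interval _ _ (lo := maxn 1 n.-1) (hi := n.+2)); try lia.
  rewrite (ball_mass_interval _ _ (lo := n) (hi := n.+1)); try lia.
  rewrite (@big_cat_nat _ _ _ n) /=; try lia.
  rewrite big_nat_recr //= !big_nat1.
  have := interval_mass_ge0 f_pos (maxn 1 n.-1) n ltac:(lia) ltac:(lia).
  lra.
have [le_next|lt_prev] := lerP (f n) (f n.+1).
  by rewrite -(ler_pM2r (f_pos n _)); [lra | lia].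
by rewrite -(ler_pM2r (f_pos n.+1 _)); [lra | lia].
Qed.

Lemma doubling_concave : concave_on f 1 n.+1.
Proof.
move=> j j_ge1 j_le.
have := f_doubling j.+1 0 ltac:(lia).
rewrite (ball_mass_interval _ _ (lo := j) (hi := j.+3)); try lia.
rewrite (ball_mass_interval _ _ (lo := j.+1) (hi := j.+2)); try lia.
rewrite big_nat1 big_ltn; last by lia.
rewrite big_ltn; last by lia.
rewrite big_nat1.
have : 0 <= (3 - C) * f j.+1.
  by apply: mulr_ge0; [rewrite subr_ge0 | apply/ltW/f_pos; lia].
lra.
Qed.

(* With [p = x - k], a ball B(x, k) of L_n that reaches the end n is [p, n],
   and B(x, 2k + 1) is [max(1, p - k - 1), n]. *)
Lemma right_end_doubling p k :
  (2 <= p)%N -> (p + k <= n)%N -> (n < p + 2 * k)%N ->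
  \sum_(maxn 1 (p - k.+1) <= i < n.+1) f i <= C * \sum_(p <= i < n.+1) f i.
Proof.
move=> p_ge2 pk_le n_lt.
have C_ge2 := doubling_ge2 ltac:(lia).
have fp_gt0 := f_pos p ltac:(lia).
have T_ge0 := interval_mass_ge0 f_pos p n.+1 ltac:(lia) ltac:(lia).
rewrite (@big_cat_nat _ _ _ p) /=; try lia.
have [fp_lt|fc_le] := ltrP (f p) (f n.+1).
  have := concave_sum_left_le_right doubling_concave (maxn 1 (p - k.+1)) p
    ltac:(lia) ltac:(lia) ltac:(lia) (ltW fp_gt0) (ltW fp_lt).
  have : 0 <= (C - 2) * \sum_(p <= i < n.+1) f i by apply: mulr_ge0; lra.
  lra.
(* Doubling at the centre x + 1 of L_(n+1) controls all of [max(1, p - k - 1), n]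
   but one term [g], which concavity bounds by [2 f p - f (n + 1)]. *)
have next := f_doubling (p + k).+1 k ltac:(lia).
rewrite (ball_mass_interval _ _ (lo := maxn 1 (p - k)) (hi := n.+2)) in next;
  try lia.
rewrite (ball_mass_interval _ _ (lo := p.+1) (hi := n.+2)) in next; try lia.
rewrite (big_nat_recr n.+1 (maxn 1 (p - k))) in next; last by lia.
rewrite (big_nat_recr n.+1 p.+1) in next; last by lia.
rewrite (@big_cat_nat _ _ _ p (maxn 1 (p - k))) /= in next; try lia.
rewrite [\sum_(p <= i < n.+1) f i]big_ltn in next *; last by lia.
have [g [L_split g_le]] : exists g, \sum_(maxn 1 (p - k.+1) <= i < p) f i =
    g + \sum_(maxn 1 (p - k) <= i < p) f i /\ g + f n.+1 <= 2 * f p.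
  have [p_small|p_big] := leqP p k.+1.
    exists 0; split; last by lra.
    by rewrite add0r; have -> : maxn 1 (p - k.+1) = maxn 1 (p - k) by lia.
  exists (f (p - k.+1)%N); split.
    have -> : maxn 1 (p - k.+1) = (p - k.+1)%N by lia.
    have -> : maxn 1 (p - k) = (p - k.+1)%N.+1 by lia.
    by rewrite big_ltn; last by lia.
  by apply: (concave_add_le_twice doubling_concave) fc_le; lia.
rewrite L_split.
have : 0 <= (C - 2) * (f p - f n.+1) by apply: mulr_ge0; lra.
lra.
Qed.

Lemma doubling_restrict : doubling_on n f C.
Proof.
move=> x k xn.
have [interior|reach_end] := leqP (x + k) n.
  have far : (pdist x n.+1 <= k)%N = false by rewrite /pdist; lia.
  have := f_doubling x k ltac:(lia).
  rewrite !ball_mass_recr far addr0 => doubling.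
  apply: le_trans doubling; rewrite lerDl.
  by case: ifP => _ //; apply/ltW/f_pos; lia.
have C_ge2 := doubling_ge2 ltac:(lia).
have [whole|p_ge2] := leqP (x - k) 1.
  rewrite (ball_mass_interval _ _ (lo := 1) (hi := n.+1)); try lia.
  rewrite (ball_mass_interval _ _ (lo := 1) (hi := n.+1)); try lia.
  have := interval_mass_ge0 f_pos 1 n.+1 isT (leqnSn _).
  set S := \sum_(1 <= i < n.+1) f i => S_ge0.
  have : 0 <= (C - 1) * S by apply: mulr_ge0; lra.
  lra.
rewrite (ball_mass_interval _ _ (lo := maxn 1 (x - k - k.+1)) (hi := n.+1));
  try lia.
rewrite (ball_mass_interval _ _ (lo := (x - k)%N) (hi := n.+1)); try lia.
apply: right_end_doubling; lia.
Qed.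

End Restriction.

Lemma C_mu_restrict {R : realType} {n : nat} {nu : nat -> R} :
  is_measure_on n.+1 nu -> C_mu n.+1 nu <= 3 -> C_mu n nu <= C_mu n.+1 nu.
Proof.
move=> nu_pos C_le3.
apply: (C_mu_le (is_measure_on_le (leqnSn n) nu_pos)); first exact: C_mu_ge0.
exact: doubling_restrict nu_pos (doubling_C_mu nu_pos) C_le3.
Qed.

Theorem proposition5p2 (R : realType) (n : nat) : @C_L R n <= @C_L R n.+1.
Proof.
apply: lb_le_inf.
  by exists (C_mu n.+1 (fun=> 1 : R)), (fun=> 1); split => // v _; exact: ltr01.
move=> _ [nu [nu_pos ->]].
have [le3|gt3] := lerP (C_mu n.+1 nu) 3.
  apply: le_trans (C_mu_restrict nu_pos le3).
  exact: C_L_le_C_mu (is_measure_on_le (leqnSn n) nu_pos).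
exact: le_trans (C_L_le3 n) (ltW gt3).
Qed.
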